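(* Let $(R,\mathfrak{m})$ be a $d$-dimensional local ring of prime characteristic $p>0$, let $I$ be an $\mathfrak{m}$-primary ideal, and let $J=(x_1,\ldots,x_d)$ be a minimal reduction of $I$ generated by a system of parameters. For $q=p^e$ let $\mathcal{R}'_q=R[I^{[q]}t,t^{-1}]$ be the extended Rees algebra of $I^{[q]}$ and $J_q=(x_1^qt,\ldots,x_d^qt)\subseteq\mathcal{R}'_q$; write $\mathcal{R}'=\mathcal{R}'_1$. Then $a(H^d_{J_q}(\mathcal{R}'_q))\leq a(H^d_{J_1}(\mathcal{R}'))$ for all $q=p^e$.
   Context: $I^{[q]}=(x^q\mid x\in I)$. The local cohomology modules $H^d_{J_q}(\mathcal{R}'_q)$ are $\mathbb{Z}$-graded with the grading induced by $\deg t=1$. For a $\mathbb{Z}$-graded module $M$, $a(M)=\sup\{n\in\mathbb{Z}\mid M_n\neq0\}$. *)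

From HB Require Import structures.
From mathcomp Require Import all_boot all_order all_algebra.
Set Implicit Arguments. Unset Strict Implicit. Unset Printing Implicit Defensive.
Import Order.TTheory GRing.Theory Num.Theory.
Local Open Scope ring_scope.

Section CommAlg.
Variable R : comNzRingType.

Definition subsetR (I J : R -> Prop) : Prop := forall x, I x -> J x.
Definition eqI (I J : R -> Prop) : Prop := forall x, I x <-> J x.

Definition is_ideal (I : R -> Prop) : Prop :=
  [/\ I 0, (forall x y, I x -> I y -> I (x + y)) & (forall r x, I x -> I (r * x))].

Definition ideal_gen (S : R -> Prop) : R -> Prop :=
  fun z => forall K, is_ideal K -> subsetR S K -> K z.

Definition ideal_mul (I J : R -> Prop) : R -> Prop :=
  ideal_gen (fun z => exists a b, [/\ I a, J b & z = a * b]).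

Fixpoint ideal_pow (I : R -> Prop) (n : nat) : R -> Prop :=
  match n with
  | 0 => fun _ => True
  | n'.+1 => ideal_mul (ideal_pow I n') I
  end.

Definition frob_pow (I : R -> Prop) (q : nat) : R -> Prop :=
  ideal_gen (fun z => exists a, I a /\ z = a ^+ q).

Definition prime_ideal (P : R -> Prop) : Prop :=
  [/\ is_ideal P, ~ P 1 & forall a b, P (a * b) -> P a \/ P b].

Definition maximal_ideal (M : R -> Prop) : Prop :=
  [/\ is_ideal M, ~ M 1 &
      forall N, is_ideal N -> subsetR M N -> ~ N 1 -> subsetR N M].

Definition local_ring (m : R -> Prop) : Prop :=
  maximal_ideal m /\ forall M, maximal_ideal M -> eqI M m.

Definition noetherian : Prop :=
  forall I, is_ideal I ->
    exists s : seq R, eqI I (ideal_gen (fun z => z \in s)).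

Definition prime_chain (P : nat -> R -> Prop) (n : nat) : Prop :=
  (forall i, (i <= n)%N -> prime_ideal (P i)) /\
  (forall i, (i < n)%N -> subsetR (P i) (P i.+1) /\ ~ subsetR (P i.+1) (P i)).

Definition krull_dim (d : nat) : Prop :=
  (exists P, prime_chain P d) /\ ~ (exists P, prime_chain P d.+1).

Definition primary_to (m I : R -> Prop) : Prop :=
  [/\ is_ideal I, subsetR I m & forall x, m x -> exists n, I (x ^+ n)].

Definition reduction (J I : R -> Prop) : Prop :=
  [/\ is_ideal J, subsetR J I &
      exists n, eqI (ideal_mul J (ideal_pow I n)) (ideal_pow I n.+1)].

Definition minimal_reduction (J I : R -> Prop) : Prop :=
  reduction J I /\ forall K, reduction K I -> subsetR K J -> subsetR J K.

(* The extended Rees algebra R' = R[I t, t^-1] of an ideal I is the graded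
   subring of R[t, t^-1] whose degree-n component is  rees_comp I n * t^n,
   where rees_comp I n = I^n for n >= 0 and = R for n < 0. *)
Definition rees_comp (I : R -> Prop) (n : int) : R -> Prop :=
  match n with
  | Posz k => ideal_pow I k
  | Negz _ => fun _ => True
  end.

(* Top local cohomology H^d_{(y_1,...,y_d)}(R') via the Cech complex, with
   y_i = z_i t (z_i in I, homogeneous of degree 1), Y = y_1 ... y_d.
   H^d = R'_Y / sum_i Im(R'_{Y/y_i}).  A homogeneous class of degree n is
   [a t^(n+dk) / Y^k] with a in rees_comp I (n + d k); it vanishes iff for some
   s, (a t^(n+dk)) Y^s lies in the ideal (y_1^(k+s), ..., y_d^(k+s)) of R'; by
   homogeneity the coefficients may be taken of degree n + (d-1)(k+s), i.e.
   a * (prod z)^s = sum_i c_i z_i^(k+s) with c_i in rees_comp I (n+(d-1)(k+s)).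
   [topH_nonzero_deg I z n] states that the degree-n component of
   H^d_{(z_1 t,...,z_d t)}(R[I t, t^-1]) is nonzero. *)
Definition cech_class_zero (d : nat) (I : R -> Prop) (z : 'I_d -> R)
    (n : int) (k : nat) (a : R) : Prop :=
  exists s : nat, exists c : 'I_d -> R,
    (forall i, rees_comp I (n + ((d.-1 * (k + s))%N)%:Z) (c i)) /\
    a * (\prod_(i < d) z i) ^+ s = \sum_(i < d) c i * z i ^+ (k + s).

Definition topH_nonzero_deg (d : nat) (I : R -> Prop) (z : 'I_d -> R)
    (n : int) : Prop :=
  exists k : nat, exists a : R,
    rees_comp I (n + ((d * k)%N)%:Z) a /\ ~ cech_class_zero I z n k a.

(* a(M) <= a(N) for Z-graded modules, with a(M) = sup {n | M_n <> 0} taken in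
   Z ∪ {±oo}:  every nonzero degree of M is bounded by a nonzero degree of N. *)
Definition a_inv_le (M N : int -> Prop) : Prop :=
  forall n, M n -> exists n', n <= n' /\ N n'.

End CommAlg.

(** If all degree-n classes of the top Čech cohomology of R[It, t^-1] with
    respect to x_1 t, ..., x_d t vanish, then so do those of R[I^[q]t, t^-1]
    with respect to x_1^q t, ..., x_d^q t: raising a vanishing relation
    [a (prod x)^s = sum c_i x_i^(k+s)] to the q-th power, which is additive in
    characteristic p, yields a vanishing relation for [a^q]; the vanishing
    classes form an ideal, and every element of (I^[q])^N lies in the ideal
    generated by the q-th powers of elements of I^N.  Hence every nonzero degree
    of the Frobenius side is a nonzero degree of H^d_{J_1}(R').  Of the
    hypotheses only [x_i \in I], i.e. [J \subset I], is needed. *)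
From mathcomp Require Import all_boot all_order all_algebra ring.
From Stdlib Require Import Classical.
Set Implicit Arguments. Unset Strict Implicit. Unset Printing Implicit Defensive.
Import GRing.Theory Num.Theory.
Local Open Scope ring_scope.

Section Ideals.
Variable R : comNzRingType.
Implicit Types (I S K : R -> Prop).

Lemma ideal0 K : is_ideal K -> K 0.
Proof. by case. Qed.

Lemma idealD K x y : is_ideal K -> K x -> K y -> K (x + y).
Proof. by case=> _ + _; apply. Qed.

Lemma idealMl K r x : is_ideal K -> K x -> K (r * x).
Proof. by case=> _ _; apply. Qed.

Lemma is_ideal_gen S : is_ideal (ideal_gen S).
Proof.
split.
- by move=> K [].
- by move=> x y hx hy K hK hS; apply: idealD hK (hx K hK hS) (hy K hK hS).
- by move=> r x hx K hK hS; apply: idealMl hK (hx K hK hS).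
Qed.

Lemma ideal_gen_least S K : is_ideal K -> subsetR S K -> subsetR (ideal_gen S) K.
Proof. by move=> hK hS x; apply. Qed.

Lemma ideal_gen_in S x : S x -> ideal_gen S x.
Proof. by move=> hx K _; apply. Qed.

Lemma is_ideal_pow I n : is_ideal (ideal_pow I n).
Proof. by case: n => [|n] /=; [split | apply: is_ideal_gen]. Qed.

Lemma is_ideal_rees_comp I m : is_ideal (rees_comp I m).
Proof. by case: m => [j|j] /=; [apply: is_ideal_pow | split]. Qed.

Lemma rees_comp_mulr I m c y :
  rees_comp I m c -> I y -> rees_comp I (m + 1) (c * y).
Proof.
case: m => [j|[|j]] hc hy //.
by rewrite -PoszD addn1; apply: ideal_gen_in; exists c, y.
Qed.

Lemma rees_comp_mul_prod I (T : Type) (z : T -> R) (l : seq T) m c :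
  (forall j, I (z j)) -> rees_comp I m c ->
  rees_comp I (m + (size l)%:Z) (c * \prod_(j <- l) z j).
Proof.
move=> zI; elim: l m c => [|j l IHl] m c hc; first by rewrite big_nil mulr1 addr0.
rewrite big_cons mulrA /= -addn1 PoszD addrA [_ + 1]addrAC.
exact/IHl/rees_comp_mulr.
Qed.

End Ideals.

Lemma size_filter_neq d (i : 'I_d) : size [seq j <- index_enum 'I_d | j != i] = d.-1.
Proof.
rewrite size_filter; have := cardC1 i; rewrite card_ord => <-.
by rewrite cardE /enum_mem size_filter.
Qed.


Section CechVanishing.
Variables (R : comNzRingType) (d : nat) (I : R -> Prop) (z : 'I_d -> R).
Variables (n : int) (k : nat).
Hypothesis zI : forall j, I (z j).

Definition cech_zero_at (s : nat) (a : R) : Prop :=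
  exists c : 'I_d -> R,
    (forall i, rees_comp I (n + ((d.-1 * (k + s))%N)%:Z) (c i)) /\
    a * (\prod_(i < d) z i) ^+ s = \sum_(i < d) c i * z i ^+ (k + s).

(* Multiply the relation by [prod_j z_j], absorbing [prod_(j != i) z_j] into [c_i]. *)
Lemma cech_zero_atS s a : cech_zero_at s a -> cech_zero_at s.+1 a.
Proof.
move=> [c [cI eq_a]].
exists (fun i => c i * \prod_(j <- [seq j <- index_enum 'I_d | j != i]) z j); split.
  move=> i; have := rees_comp_mul_prod [seq j <- index_enum 'I_d | j != i] zI (cI i).
  by rewrite size_filter_neq addnS mulnS PoszD [(d.-1)%:Z + _]addrC addrA.
rewrite exprSr mulrA eq_a mulr_suml; apply: eq_bigr => i _.
rewrite (bigD1 i) //= big_filter addnS exprS; ring.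
Qed.

Lemma cech_zero_at_addn s t a : cech_zero_at s a -> cech_zero_at (s + t) a.
Proof. by elim: t => [|t IHt]; rewrite ?addn0 // addnS => /IHt/cech_zero_atS. Qed.

Lemma is_ideal_cech_class_zero : is_ideal (cech_class_zero I z n k).
Proof.
split.
- exists 0%N, (fun _ => 0); split=> [i|]; first exact: ideal0 (is_ideal_rees_comp _ _).
  by rewrite mul0r big1 // => i _; rewrite mul0r.
- move=> a b [s1 za] [s2 zb].
  have [ca [caI eq_a]] := cech_zero_at_addn s2 za.
  have := cech_zero_at_addn s1 zb; rewrite addnC => -[cb [cbI eq_b]].
  exists (s1 + s2)%N, (fun i => ca i + cb i); split=> [i|].
    exact: idealD (is_ideal_rees_comp _ _) (caI i) (cbI i).
  by rewrite mulrDl eq_a eq_b -big_split; apply: eq_bigr => i _; rewrite mulrDl.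
- move=> r a [s [c [cI eq_a]]]; exists s, (fun i => r * c i); split=> [i|].
    exact: idealMl (is_ideal_rees_comp _ _) (cI i).
  by rewrite -mulrA eq_a mulr_sumr; apply: eq_bigr => i _; rewrite mulrA.
Qed.

End CechVanishing.

Section Frobenius.
Variables (R : comNzRingType) (p e : nat).
Hypothesis pcharRp : p \in [pchar R].
Local Notation q := (p ^ e)%N.

Lemma frobD (x y : R) : (x + y) ^+ q = x ^+ q + y ^+ q.
Proof.
by apply: exprDn_pchar; rewrite pnatX (pnatE _ (pcharf_prime pcharRp)) pcharRp.
Qed.

Lemma frob0 : (0 : R) ^+ q = 0.
Proof. by rewrite expr0n expn_eq0 eqn0Ngt (prime_gt0 (pcharf_prime pcharRp)). Qed.

Lemma frob_sum d (F : 'I_d -> R) : (\sum_(i < d) F i) ^+ q = \sum_(i < d) F i ^+ q.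
Proof. exact: (big_morph (fun x => x ^+ q) frobD frob0). Qed.

Lemma frob_pow_full y : frob_pow (fun _ : R => True) q y.
Proof.
rewrite -[y]mulr1; apply: (idealMl (K := frob_pow _ q)); first exact: is_ideal_gen.
by apply: ideal_gen_in; exists 1; rewrite expr1n.
Qed.

Lemma frob_pow_mul (A B : R -> Prop) u v :
  frob_pow A q u -> frob_pow B q v -> frob_pow (ideal_mul A B) q (u * v).
Proof.
have F := is_ideal_gen (fun w => exists a, ideal_mul A B a /\ w = a ^+ q).
move=> Au Bv; move: u Au v Bv; apply: ideal_gen_least.
  split=> [v _|u u' hu hu' v Bv|r u hu v Bv]; first by rewrite mul0r; apply: ideal0 F.
  - by rewrite mulrDl; apply: idealD F (hu v Bv) (hu' v Bv).
  - by rewrite -mulrA; apply: idealMl F (hu v Bv).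
move=> _ [a [Aa ->]]; apply: ideal_gen_least.
  split=> [|v v' hv hv'|r v hv]; first by rewrite mulr0; apply: ideal0 F.
  - by rewrite mulrDr; apply: idealD F hv hv'.
  - by rewrite mulrCA; apply: idealMl F hv.
move=> _ [b [Bb ->]]; rewrite -exprMn; apply: ideal_gen_in.
by exists (a * b); split=> //; apply: ideal_gen_in; exists a, b.
Qed.

Lemma ideal_pow_frob_sub (I : R -> Prop) N :
  subsetR (ideal_pow (frob_pow I q) N) (frob_pow (ideal_pow I N) q).
Proof.
elim: N => [|N IHN] /= y; first by move=> _; apply: frob_pow_full.
apply: ideal_gen_least y; first exact: is_ideal_gen.
by move=> _ [u [v [uIN vI ->]]]; apply: frob_pow_mul (IHN _ uIN) vI.
Qed.

Lemma rees_comp_frob_sub (I : R -> Prop) m :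
  subsetR (rees_comp (frob_pow I q) m) (frob_pow (rees_comp I m) q).
Proof.
case: m => [N|N] y; first exact: ideal_pow_frob_sub.
by move=> _; apply: frob_pow_full.
Qed.

Lemma rees_comp_frob (I : R -> Prop) m c :
  rees_comp I m c -> rees_comp (frob_pow I q) m (c ^+ q).
Proof.
case: m => [N|N] //=; elim: N c => [|N IHN] //= c.
have powI := is_ideal_pow (frob_pow I q) N.+1.
apply: (ideal_gen_least (K := fun c => ideal_pow (frob_pow I q) N.+1 (c ^+ q))).
  split=> [|a b|r a]; rewrite ?frob0 ?frobD ?exprMn.
  - exact: ideal0.
  - exact: idealD.
  - exact: idealMl.
move=> _ [a [b [aIN bI ->]]]; rewrite exprMn; apply: ideal_gen_in.
by exists (a ^+ q), (b ^+ q); split=> //; [apply: IHN | apply: ideal_gen_in; exists b].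
Qed.

Lemma cech_class_zero_frob d (I : R -> Prop) (x : 'I_d -> R) n k a :
  cech_class_zero I x n k a ->
  cech_class_zero (frob_pow I q) (fun i => x i ^+ q) n k (a ^+ q).
Proof.
move=> [s [c [cI eq_a]]]; exists s, (fun i => c i ^+ q); split.
  by move=> i; apply: rees_comp_frob.
rewrite prodrXl exprAC -exprMn eq_a frob_sum.
by apply: eq_bigr => i _; rewrite exprMn exprAC.
Qed.

Lemma topH_vanish_frob d (I : R -> Prop) (x : 'I_d -> R) n :
  (forall j, I (x j)) ->
  (forall k a, rees_comp I (n + (d * k)%N%:Z) a -> cech_class_zero I x n k a) ->
  forall k b, rees_comp (frob_pow I q) (n + (d * k)%N%:Z) b ->
    cech_class_zero (frob_pow I q) (fun i => x i ^+ q) n k b.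
Proof.
move=> xI vanish k b /rees_comp_frob_sub; apply: ideal_gen_least.
  by apply: is_ideal_cech_class_zero => j; apply: ideal_gen_in; exists (x j).
by move=> _ [a [Ia ->]]; apply/cech_class_zero_frob/vanish.
Qed.

End Frobenius.

Theorem proposition3p4 (R : comNzRingType) (p d : nat)
    (m I J : R -> Prop) (x : 'I_d -> R) :
  noetherian R -> local_ring m -> krull_dim R d ->
  p \in [pchar R] ->
  primary_to m I ->
  minimal_reduction J I ->
  eqI J (ideal_gen (fun z => exists i, z = x i)) ->
  (* x_1, ..., x_d is a system of parameters *)
  primary_to m (ideal_gen (fun z => exists i, z = x i)) ->
  forall e : nat,
    let q := (p ^ e)%N in
    a_inv_le (topH_nonzero_deg (frob_pow I q) (fun i => x i ^+ q))
             (topH_nonzero_deg I x).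
Proof.
move=> _ _ _ pcharRp _ [[_ JI _] _] defJ _ e q n [k [b [Ib b_nz]]].
have xI j : I (x j) by apply/JI/defJ; apply: ideal_gen_in; exists j.
exists n; split=> //; apply: NNPP => deg_n_zero; apply: b_nz.
apply: (topH_vanish_frob pcharRp xI _ Ib) => k' a Ia.
by apply: NNPP => a_nz; apply: deg_n_zero; exists k', a.
Qed.
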